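(* A slice function $f\in\mathcal{S}(\Omega)$ admits a multiplicative inverse $f^{-\bullet}$ in the algebra $\mathcal{S}(\Omega)$ (with respect to the slice product) if, and only if, $f^c$ does. If this is the case, then $(f^c)^{-\bullet}=(f^{-\bullet})^c$. Furthermore, $f$ admits a multiplicative inverse $f^{-\bullet}$ if, and only if, both $N(f)$ and $N(f^c)$ do. If this is the case, then \[f^{-\bullet}=f^c\cdot N(f)^{-\bullet}=N(f^c)^{-\bullet}\cdot f^c.\] Moreover, $N(f)^{-\bullet}=(f^{-\bullet})^c\cdot f^{-\bullet}=N((f^{-\bullet})^c)$.
   Context: Let $A$ be a finite-dimensional real algebra with unit $1$ ($\mathbb{R}$ identified with $\mathbb{R}1$) which is alternative (the associator $(x,y,z)=(xy)z-x(yz)$ is alternating), with a $^*$-involution $x\mapsto x^c$ (real linear, $(x^c)^c=x$, $(xy)^c=y^cx^c$, $r^c=r$ for $r\in\mathbb{R}$). Let $t(x)=x+x^c$, $n(x)=xx^c$, $\mathbb{S}_A=\{J\in A:t(J)=0,n(J)=1\}$ (assumed non-empty), $Q_A=\mathbb{R}\cup\{x\in A:t(x),n(x)\in\mathbb{R},\ 4n(x)>t(x)^2\}$; every $x\in Q_A$ is $\alpha+\beta J$ with $\alpha,\beta\in\mathbb{R}$, $J\in\mathbb{S}_A$. Let $D\subseteq\mathbb{C}$ be non-empty and invariant under complex conjugation and $\Omega=\{\alpha+\beta J:\alpha+i\beta\in D,\ J\in\mathbb{S}_A\}$. Let $A_{\mathbb{C}}=\{a+\imath b:a,b\in A\}$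 with product $(a+\imath b)(a'+\imath b')=aa'-bb'+\imath(ab'+ba')$, conjugation $\overline{a+\imath b}=a-\imath b$ and involution $(a+\imath b)^c=a^c+\imath b^c$. A stem function is $F=F_1+\imath F_2:D\to A_{\mathbb{C}}$ with $F(\bar z)=\overline{F(z)}$; it induces the slice function $f=\mathcal{I}(F):\Omega\to A$, $f(\alpha+\beta J)=F_1(\alpha+i\beta)+JF_2(\alpha+i\beta)$ (each slice function is induced by a unique stem function). $\mathcal{S}(\Omega)$ is the set of slice functions on $\Omega$, with pointwise sum, slice product $f\cdot g=\mathcal{I}(FG)$ (pointwise product of the stem functions in $A_{\mathbb{C}}$), conjugate $f^c=\mathcal{I}(F^c)$ where $F^c(z)=F(z)^c$, and normal function $N(f)=f\cdot f^c$; with these operations $\mathcal{S}(\Omega)$ is a real alternative $^*$-algebra with unit the constant $1$. $h^{-\bullet}$ denotes the two-sided multiplicative inverse of $h$ in $\mathcal{S}(\Omega)$. *)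

(* The (non-associative) product,
   unit and involution of A are explicit operations with their axioms. *)
From HB Require Import structures.
From mathcomp Require Import all_boot all_order all_algebra.
From mathcomp Require Import reals.
From Stdlib Require Import ClassicalEpsilon.
Set Implicit Arguments. Unset Strict Implicit. Unset Printing Implicit Defensive.
Import Order.TTheory GRing.Theory Num.Theory.
Local Open Scope ring_scope.

Section SliceDefs.
Variables (R : realType) (A : vectType R).
Variables (mul : A -> A -> A) (u : A) (cj : A -> A).

Definition assoc (x y z : A) : A := mul (mul x y) z - mul x (mul y z).

(* A is a unital real alternative algebra with a *-involution;
   the reals are identified with R u (r |-> r *: u). *)
Record alt_star_alg : Prop := {
  mul_linl : forall (r : R) (x y z : A), mul (r *: x + y) z = r *: mul x z + mul y z;
  mul_linr : forall (r : R) (x y z : A), mul x (r *: y + z) = r *: mul x y + mul x z;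
  mul1x : forall x, mul u x = x;
  mulx1 : forall x, mul x u = x;
  assoc_alt1 : forall x y, assoc x x y = 0;
  assoc_alt2 : forall x y, assoc x y x = 0;
  assoc_alt3 : forall x y, assoc y x x = 0;
  cj_lin : forall (r : R) (x y : A), cj (r *: x + y) = r *: cj x + cj y;
  cjK : forall x, cj (cj x) = x;
  cj_mul : forall x y, cj (mul x y) = mul (cj y) (cj x);
  cj_real : forall r : R, cj (r *: u) = r *: u
}.

Definition tr (x : A) : A := x + cj x.
Definition nrm (x : A) : A := mul x (cj x).

Definition sphereA (J : A) : Prop := tr J = 0 /\ nrm J = u.

(* D ⊆ C is represented as a predicate on pairs (alpha, beta) ~ alpha + i beta *)
Variable D : R * R -> Prop.

Definition conj_inv : Prop := forall a b, D (a, b) -> D (a, - b).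

Definition Omega (x : A) : Prop :=
  exists a b J, D (a, b) /\ sphereA J /\ x = a *: u + b *: J.

(* A_C = A x A, (a,b) ~ a + i b *)
Definition cmul (p q : A * A) : A * A :=
  (mul p.1 q.1 - mul p.2 q.2, mul p.1 q.2 + mul p.2 q.1).
Definition cbar (p : A * A) : A * A := (p.1, - p.2).
Definition cinv (p : A * A) : A * A := (cj p.1, cj p.2).

Definition stem (F : R * R -> A * A) : Prop :=
  forall a b, D (a, b) -> F (a, - b) = cbar (F (a, b)).

Definition induces (F : R * R -> A * A) (f : A -> A) : Prop :=
  forall a b J, D (a, b) -> sphereA J ->
    f (a *: u + b *: J) = (F (a, b)).1 + mul J (F (a, b)).2.

Definition is_slice (f : A -> A) : Prop := exists F, stem F /\ induces F f.

Definition decomp (x : A) : R * R * A :=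
  epsilon (inhabits (0, 0, 0))
    (fun t => D (t.1.1, t.1.2) /\ sphereA t.2 /\ x = t.1.1 *: u + t.1.2 *: t.2).

Definition I (F : R * R -> A * A) : A -> A :=
  fun x => let t := decomp x in (F t.1).1 + mul t.2 (F t.1).2.

(* the (unique) stem function inducing a slice function *)
Definition stem_of (f : A -> A) : R * R -> A * A :=
  epsilon (inhabits (fun _ => (0, 0))) (fun F => stem F /\ induces F f).

Definition smul (f g : A -> A) : A -> A :=
  I (fun z => cmul (stem_of f z) (stem_of g z)).
Definition sconj (f : A -> A) : A -> A := I (fun z => cinv (stem_of f z)).
Definition N (f : A -> A) : A -> A := smul f (sconj f).
Definition sone : A -> A := fun _ => u.

Definition eqO (f g : A -> A) : Prop := forall x, Omega x -> f x = g x.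

Definition is_sinv (h g : A -> A) : Prop :=
  is_slice g /\ eqO (smul h g) sone /\ eqO (smul g h) sone.
Definition sinvertible (h : A -> A) : Prop := exists g, is_sinv h g.

End SliceDefs.

From Pilot Require Import Defs.
From HB Require Import structures.
From mathcomp Require Import all_boot all_order all_algebra.
From mathcomp Require Import ring lra.
From Stdlib Require Import ClassicalEpsilon.
From mathcomp Require Import reals.
Set Implicit Arguments. Unset Strict Implicit. Unset Printing Implicit Defensive.
Import GRing.Theory Num.Theory.
Local Open Scope ring_scope.

(* Slice operations act pointwise on stem functions: the slice product,
   conjugate and normal function of slice functions are induced by the
   product, the involution F |-> F^c and F F^c in the complexification
   A_C = A (x) C, and a slice function is invertible exactly when its stem
   function is invertible at every point of D.  Since A_C is again a unital
   alternative algebra on which ^c is an anti-involution, everything reduces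
   to facts about two-sided inverses in an alternative ring, all consequences
   of the Teichmueller identity and the alternating law: an element and its
   inverse associate with everything, so inverses are unique, (pr)^-1 =
   r^-1 p^-1, and if ab and ba are invertible then so is a, with inverse
   b (ab)^-1 = (ba)^-1 b.  Applied to a = f and b = f^c this gives all the
   statements. *)

(* Z (+) V with V * V = 0: an additive embedding of the Z-module V into a
   commutative ring, through which [ring] decides identities in V. *)
Definition trivial_ext (V : zmodType) : Type := (int * V)%type.
HB.instance Definition _ (V : zmodType) := GRing.Zmodule.on (trivial_ext V).

Section TrivialExtension.
Variable V : zmodType.

Definition text_one : trivial_ext V := (1, 0).
Definition text_mul (p q : trivial_ext V) : trivial_ext V :=
  (p.1 * q.1, p.2 *~ q.1 + q.2 *~ p.1).

Lemma text_mulA : associative text_mul.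
Proof.
move=> [a x] [b y] [c z]; rewrite /text_mul /=; congr (_, _); first by rewrite mulrA.
by rewrite !mulrzDl -!mulrzA !addrA (mulrC c a) (mulrC b a).
Qed.
Lemma text_mulC : commutative text_mul.
Proof. by move=> [a x] [b y]; rewrite /text_mul /= mulrC addrC. Qed.
Lemma text_mul1 : left_id text_one text_mul.
Proof. by move=> [a x]; rewrite /text_mul /= mul1r mul0rz add0r mulr1z. Qed.
Lemma text_mulDl : left_distributive text_mul +%R.
Proof.
move=> [a x] [b y] [c z]; rewrite /text_mul /=; congr (_, _); first by rewrite mulrDl.
by rewrite mulrzDl mulrzDr addrACA.
Qed.
Lemma text_one_neq0 : text_one != 0.
Proof. by apply/eqP => -[]. Qed.

HB.instance Definition _ := GRing.Zmodule_isComNzRing.Build (trivial_ext V)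
  text_mulA text_mulC text_mul1 text_mulDl text_one_neq0.

Definition text_in (v : V) : trivial_ext V := (0, v).
Lemma text_in_is_zmod_morphism : zmod_morphism text_in.
Proof. by move=> x y; rewrite /text_in; congr (_, _); rewrite subr0. Qed.
HB.instance Definition _ := GRing.isZmodMorphism.Build V (trivial_ext V) text_in
  text_in_is_zmod_morphism.
Lemma text_in_inj : injective text_in.
Proof. by move=> x y []. Qed.

End TrivialExtension.

Ltac zmod_ring := apply: text_in_inj; ring.

Lemma eq_of_sub_eq (V : zmodType) (a b x y : V) : a = b -> x - y = a - b -> x = y.
Proof. by move=> -> h; apply: subr0_eq; rewrite h subrr. Qed.

Record alternative_ring (V : zmodType) (m : V -> V -> V) (e : V) : Prop := {
  ar_mulDl : forall x y z, m (x + y) z = m x z + m y z;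
  ar_mulDr : forall x y z, m x (y + z) = m x y + m x z;
  ar_mul1x : forall x, m e x = x;
  ar_mulx1 : forall x, m x e = x;
  ar_alt_l : forall x y, m (m x x) y = m x (m x y);
  ar_alt_r : forall x y, m (m x y) y = m x (m y y)
}.

Section AlternativeRing.
Variables (V : zmodType) (m : V -> V -> V) (e : V).
Hypothesis HV : alternative_ring m e.

Definition associator x y z := m (m x y) z - m x (m y z).
Local Notation "[ x , y , z ]" := (associator x y z).
Local Notation mulDl := (ar_mulDl HV).
Local Notation mulDr := (ar_mulDr HV).
Local Notation mul1x := (ar_mul1x HV).
Local Notation mulx1 := (ar_mulx1 HV).

Lemma assoc_xxy x y : [x, x, y] = 0.
Proof. by rewrite /associator (ar_alt_l HV) subrr. Qed.
Lemma assoc_xyy x y : [x, y, y] = 0.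
Proof. by rewrite /associator (ar_alt_r HV) subrr. Qed.

Lemma mul0x x : m 0 x = 0.
Proof. by apply: (addrI (m 0 x)); rewrite -mulDl !addr0. Qed.
Lemma mulx0 x : m x 0 = 0.
Proof. by apply: (addrI (m x 0)); rewrite -mulDr !addr0. Qed.
Lemma mulNx x y : m (- x) y = - m x y.
Proof. by apply/eqP; rewrite -addr_eq0 -mulDl addNr mul0x. Qed.
Lemma mulxN x y : m x (- y) = - m x y.
Proof. by apply/eqP; rewrite -addr_eq0 -mulDr addNr mulx0. Qed.

Ltac expand :=
  rewrite /associator ?(mulDl, mulDr, mulNx, mulxN, mul0x, mulx0).

Lemma assoc_swap12 x y z : [y, x, z] = - [x, y, z].
Proof.
have E : [x + y, x + y, z] = [x, x, z] + [y, y, z] + ([x, y, z] + [y, x, z]).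
  by expand; zmod_ring.
by apply/eqP; rewrite -addr_eq0 addrC; move: E; rewrite !assoc_xxy !add0r => <-.
Qed.
Lemma assoc_swap23 x y z : [x, z, y] = - [x, y, z].
Proof.
have E : [x, y + z, y + z] = [x, y, y] + [x, z, z] + ([x, y, z] + [x, z, y]).
  by expand; zmod_ring.
by apply/eqP; rewrite -addr_eq0 addrC; move: E; rewrite !assoc_xyy !add0r => <-.
Qed.
Lemma assoc_rot x y z : [y, z, x] = [x, y, z].
Proof. by rewrite assoc_swap23 assoc_swap12 opprK. Qed.

Lemma assoc_x1y x y : [x, e, y] = 0.
Proof. by rewrite /associator mulx1 mul1x subrr. Qed.
Lemma assoc_xy1 x y : [x, y, e] = 0.
Proof. by rewrite /associator !mulx1 subrr. Qed.
Lemma assocDr x y z z' : [x, y, z + z'] = [x, y, z] + [x, y, z'].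
Proof. by expand; zmod_ring. Qed.
Lemma assoc0_mulA x y z : [x, y, z] = 0 -> m (m x y) z = m x (m y z).
Proof. exact: subr0_eq. Qed.

Lemma teichmuller w x y z :
  [m w x, y, z] - [w, m x y, z] + [w, x, m y z] = m w [x, y, z] + m [w, x, y] z.
Proof. by expand; zmod_ring. Qed.

Lemma assoc_sqr_x_xy x y z : [m x x, y, z] - [x, m x y, z] = m x [x, y, z].
Proof.
by have := teichmuller x x y z; rewrite !assoc_xxy mul0x !addr0.
Qed.

Lemma assoc_xy_zx x y z : [x, y, m z x] = m x [x, y, z].
Proof.
have := teichmuller z x x y.
rewrite assoc_xxy assoc_xyy mulx0 mul0x addr0 -(assoc_rot (m z x) x y).
rewrite -(assoc_rot z (m x x) y) -(assoc_rot z x (m x y)) -assoc_sqr_x_xy.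
by move=> t; apply: (eq_of_sub_eq t); zmod_ring.
Qed.

Lemma assoc_sqr x y z : [m x x, y, z] = m x [x, y, z] + m [x, y, z] x.
Proof.
have := teichmuller y z x x.
rewrite !assoc_xyy mulx0 (assoc_rot x y (m z x)) assoc_xy_zx.
rewrite (assoc_rot (m x x) y z) (assoc_rot x y z).
by move=> t; apply: (eq_of_sub_eq t); zmod_ring.
Qed.

Lemma assoc_x_xy x y z : [x, m x y, z] = m [x, y, z] x.
Proof.
have := assoc_sqr_x_xy x y z; rewrite assoc_sqr => t.
by apply: (eq_of_sub_eq (esym t)); zmod_ring.
Qed.

Lemma assoc_xy_xz x y z : [x, y, m x z] = m [x, y, z] x.
Proof.
have := teichmuller x x z y.
rewrite !assoc_xxy mul0x addr0 (assoc_swap23 (m x x)) (assoc_swap23 x y (m x z)).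
rewrite (assoc_swap23 x y z) mulxN assoc_sqr.
by move=> t; apply: (eq_of_sub_eq t); zmod_ring.
Qed.

Lemma assoc_yx_xz x y z : [y, x, m x z] = m [y, x, z] x.
Proof. by rewrite !(assoc_swap12 x y) assoc_xy_xz mulNx. Qed.

Definition is_inverse p q := m p q = e /\ m q p = e.

Lemma is_inverse_sym p q : is_inverse p q -> is_inverse q p.
Proof. by case. Qed.

Hypothesis two_torsion_free : forall v : V, v + v = 0 -> v = 0.

Lemma inverse_assoc0 p q z : is_inverse p q -> [p, q, z] = 0.
Proof.
move=> [pq qp]; set w := [p, q, z].
(* By [assoc_x_xy] at y = q and y = p, w is killed on the right by p and q,
   whereas (w p) q + (w q) p = 2 w. *)
have wp : m w p = 0 by rewrite -assoc_x_xy pq assoc_x1y.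
have wq : m w q = 0.
  by apply/eqP; rewrite -oppr_eq0 -mulNx -assoc_swap12 -assoc_x_xy qp assoc_x1y.
have Ep : m (m w p) q = w + [w, p, q].
  by rewrite /associator pq mulx1 addrC subrK.
have Eq : m (m w q) p = w + [w, q, p].
  by rewrite /associator qp mulx1 addrC subrK.
apply: two_torsion_free; apply: (eq_of_sub_eq (esym (congr2 +%R Ep Eq))).
by rewrite wp wq !mul0x assoc_swap23; zmod_ring.
Qed.

Lemma inverse_mulKl p q z : is_inverse p q -> m p (m q z) = z.
Proof.
move=> ipq; rewrite -assoc0_mulA ?inverse_assoc0 //.
by case: ipq => -> _; rewrite mul1x.
Qed.

Lemma inverse_mulKr p q z : is_inverse p q -> m (m z p) q = z.
Proof.
move=> ipq; rewrite assoc0_mulA; last by rewrite -assoc_rot inverse_assoc0.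
by case: ipq => -> _; rewrite mulx1.
Qed.

Lemma inverse_uniq p q r : is_inverse p q -> m p r = e -> r = q.
Proof.
by move=> ipq pr; rewrite -(inverse_mulKl r (is_inverse_sym ipq)) pr mulx1.
Qed.

Lemma inverse_mul p p' r r' :
  is_inverse p p' -> is_inverse r r' -> is_inverse (m p r) (m r' p').
Proof.
have half a a' b b' : is_inverse a a' -> is_inverse b b' -> m (m a b) (m b' a') = e.
  move=> ia ib; pose E z := [a, b, z].
  have Eb' z : E (m b' z) = m (E z) b'.
    rewrite -{2}(inverse_mulKl z ib) [E (m b _)]assoc_yx_xz.
    by rewrite inverse_mulKr.
  have Ea' z : E (m z a') = m a' (E z).
    rewrite -{2}(inverse_mulKr z (is_inverse_sym ia)) [E (m _ a)]assoc_xy_zx.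
    by rewrite (inverse_mulKl _ (is_inverse_sym ia)).
  have E0 : E (m b' a') = 0.
    by rewrite Eb' -(mul1x a') Ea' /E assoc_xy1 mulx0 mul0x.
  have : E (m b' a') = m (m a b) (m b' a') - m a (m b (m b' a')) by [].
  rewrite E0 (inverse_mulKl _ ib) => /esym /subr0_eq ->.
  by case: ia.
move=> ip ir; split; first exact: half.
exact: half (is_inverse_sym ir) (is_inverse_sym ip).
Qed.

Lemma assoc_inverse_mul a b n n' :
  is_inverse (m a b) n -> is_inverse (m b a) n' -> [a, b, n] = 0.
Proof.
move=> [abn nab] iba; set w := [a, b, n].
have wba : m w (m b a) = 0.
  have : [a, b, m (m a b) n] = 0 by rewrite abn assoc_xy1.
  have -> : m (m a b) n = m a (m b n) + w by rewrite /w /associator addrC subrK.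
  rewrite assocDr assoc_xy_xz assoc_yx_xz -/w.
  have -> : m (m w b) a = m w (m b a) + [w, b, a] by rewrite /associator addrC subrK.
  by rewrite -(assoc_rot w b a) (assoc_swap12 a b w) subrK.
by rewrite -(inverse_mulKr w iba) wba mul0x.
Qed.

Lemma inverse_of_mul a b n n' :
  is_inverse (m a b) n -> is_inverse (m b a) n' ->
  is_inverse a (m b n) /\ m n' b = m b n.
Proof.
move=> iab iba.
have w1 := assoc_inverse_mul iab iba.
have w2 : [a, b, n'] = 0.
  by rewrite -[LHS]opprK -assoc_swap12 (assoc_inverse_mul iba iab) oppr0.
have r1 : m a (m b n) = e by rewrite -assoc0_mulA //; case: iab.
have l1 : m (m n' b) a = e.
  rewrite assoc0_mulA; last by rewrite -assoc_rot assoc_swap12 w2 oppr0.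
  by case: iba.
have bb : m (m b a) (m b n) = b.
  by rewrite assoc0_mulA ?r1 ?mulx1 // assoc_swap12 assoc_yx_xz w1 mul0x oppr0.
have lr : m n' b = m b n.
  have := inverse_assoc0 (m b n) (is_inverse_sym iba).
  by move/assoc0_mulA; rewrite bb; case: iba => _ ->; rewrite mul1x.
by split=> //; split; rewrite // -lr.
Qed.

End AlternativeRing.

Lemma lmod_two_torsion_free (R : numFieldType) (V : lmodType R) (v : V) :
  v + v = 0 -> v = 0.
Proof.
move=> vv; have : 2%:R *: v == 0 by rewrite scaler_nat mulr2n vv.
by rewrite scaler_eq0 pnatr_eq0 => /eqP.
Qed.

Section StarAlgebra.
Variables (R : realType) (A : vectType R) (mul : A -> A -> A) (u : A) (cj : A -> A).
Hypothesis HA : alt_star_alg mul u cj.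

Lemma alternative_of_star : alternative_ring mul u.
Proof.
split; [| | exact: mul1x HA | exact: mulx1 HA | |].
- by move=> x y z; have := mul_linl HA 1 x y z; rewrite !scale1r.
- by move=> x y z; have := mul_linr HA 1 x y z; rewrite !scale1r.
- by move=> x y; apply: subr0_eq; exact: assoc_alt1 HA x y.
- by move=> x y; apply: subr0_eq; exact: assoc_alt3 HA y x.
Qed.

Local Notation altA := alternative_of_star.

Lemma mulZx r x z : mul (r *: x) z = r *: mul x z.
Proof. by have := mul_linl HA r x 0 z; rewrite !addr0 (mul0x altA) ?addr0. Qed.
Lemma mulxZ r x z : mul x (r *: z) = r *: mul x z.
Proof. by have := mul_linr HA r x z 0; rewrite !addr0 (mulx0 altA) ?addr0. Qed.

Lemma cjD x y : cj (x + y) = cj x + cj y.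
Proof. by have := cj_lin HA 1 x y; rewrite !scale1r. Qed.
Lemma cj0 : cj 0 = 0.
Proof. by apply: (addrI (cj 0)); rewrite -cjD !addr0. Qed.
Lemma cjN x : cj (- x) = - cj x.
Proof. by apply/eqP; rewrite -addr_eq0 -cjD addNr cj0. Qed.
Lemma cjZ r x : cj (r *: x) = r *: cj x.
Proof. by have := cj_lin HA r x 0; rewrite !addr0 cj0 addr0. Qed.
Lemma cj1 : cj u = u.
Proof. by have := cj_real HA 1; rewrite !scale1r. Qed.

Definition cunit : A * A := (u, 0).

Lemma assoc_cmul p q r : associator (cmul mul) p q r =
  (associator mul p.1 q.1 r.1 - associator mul p.1 q.2 r.2
     - associator mul p.2 q.1 r.2 - associator mul p.2 q.2 r.1,
   associator mul p.1 q.1 r.2 + associator mul p.1 q.2 r.1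
     + associator mul p.2 q.1 r.1 - associator mul p.2 q.2 r.2).
Proof.
apply: injective_projections => /=;
  by rewrite /associator ?(ar_mulDl altA, ar_mulDr altA, mulNx altA, mulxN altA); zmod_ring.
Qed.

Lemma alternative_cmul : alternative_ring (cmul mul) cunit.
Proof.
split=> [x y z | x y z | x | x | x y | x y]; try apply: assoc0_mulA;
  try rewrite assoc_cmul; apply: injective_projections => /=;
  rewrite ?(ar_mulDl altA, ar_mulDr altA, ar_mul1x altA, ar_mulx1 altA, mul0x altA, mulx0 altA);
  rewrite ?(assoc_xxy altA, assoc_xyy altA, assoc_swap12 altA x.1 x.2, assoc_swap23 altA _ y.1 y.2);
  zmod_ring.
Qed.

Lemma cmul_two_torsion_free (p : A * A) : p + p = 0 -> p = 0.
Proof. by case: p => [a b] [] /lmod_two_torsion_free -> /lmod_two_torsion_free ->. Qed.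

Lemma cinv_cmul p q : cinv cj (cmul mul p q) = cmul mul (cinv cj q) (cinv cj p).
Proof.
by apply: injective_projections => /=; rewrite ?(cjD, cjN, cj_mul HA); zmod_ring.
Qed.

Lemma cinvK p : cinv cj (cinv cj p) = p.
Proof. by case: p => a b; rewrite /cinv /= !(cjK HA). Qed.

Lemma is_inverse_cinv p q :
  is_inverse (cmul mul) cunit p q -> is_inverse (cmul mul) cunit (cinv cj p) (cinv cj q).
Proof.
have cinv1 : cinv cj cunit = cunit by rewrite /cinv /= cj1 cj0.
by case=> pq qp; split; rewrite -cinv_cmul ?pq ?qp cinv1.
Qed.

End StarAlgebra.

Section SliceFunctions.
Variables (R : realType) (A : vectType R) (mul : A -> A -> A) (u : A) (cj : A -> A).
Variable D : R * R -> Prop.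
Hypothesis HA : alt_star_alg mul u cj.
Hypothesis HS : exists J, sphereA mul u cj J.

Local Notation sphere := (sphereA mul u cj).
Local Notation altA := (alternative_of_star HA).
Local Notation induces := (induces mul u cj D).
Local Notation slice := (is_slice mul u cj D).
Local Notation SO := (stem_of mul u cj D).
Local Notation I := (I mul u cj D).
Local Notation smul := (smul mul u cj D).
Local Notation sconj := (sconj mul u cj D).
Local Notation N := (N mul u cj D).
Local Notation eqO := (eqO mul u cj D).
Local Notation is_sinv := (is_sinv mul u cj D).
Local Notation cinverse := (is_inverse (cmul mul) (cunit u)).
Local Notation altC := (alternative_cmul HA).
Local Notation tfC := (@cmul_two_torsion_free R A).

Lemma cj_sphere J : sphere J -> cj J = - J.
Proof. by case=> /eqP; rewrite /tr addrC addr_eq0 => /eqP. Qed.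

Lemma sphere_sqr J : sphere J -> mul J J = - u.
Proof.
by move=> sJ; case: (sJ) => _; rewrite /nrm cj_sphere // (mulxN altA) => <-; rewrite opprK.
Qed.

Lemma sphere_mulK J x : sphere J -> mul J (mul J x) = - x.
Proof. by move=> sJ; rewrite -(ar_alt_l altA) sphere_sqr // (mulNx altA) (ar_mul1x altA). Qed.

Lemma sphereN J : sphere J -> sphere (- J).
Proof.
move=> sJ; split; first by rewrite /tr (cjN HA) cj_sphere // opprK addNr.
by rewrite /nrm (cjN HA) cj_sphere // opprK (mulNx altA) sphere_sqr // opprK.
Qed.

Lemma tr_point a b J : sphere J -> tr cj (a *: u + b *: J) = (a + a) *: u.
Proof.
move=> sJ; rewrite /tr (cjD HA) !(cjZ HA) (cj1 HA) cj_sphere // scalerDl scalerN.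
by zmod_ring.
Qed.

Lemma scale_unit_inj (c c' : R) : u != 0 -> c *: u = c' *: u -> c = c'.
Proof.
move=> un0 /eqP; rewrite -subr_eq0 -scalerBl scaler_eq0 (negbTE un0) orbF.
by rewrite subr_eq0 => /eqP.
Qed.

Lemma point_repr_eq a b J a' b' J' : u != 0 -> sphere J -> sphere J' ->
  a *: u + b *: J = a' *: u + b' *: J' -> a = a' /\ b *: J = b' *: J'.
Proof.
move=> un0 sJ sJ' E; have aa : a = a'.
  by have := congr1 (tr cj) E; rewrite !tr_point // => /(scale_unit_inj un0); lra.
by split=> //; apply: (addrI (a *: u)); rewrite {2}aa.
Qed.

Lemma sphere_scale_sqr b J b' J' : u != 0 -> sphere J -> sphere J' ->
  b *: J = b' *: J' -> b * b = b' * b'.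
Proof.
move=> un0 sJ sJ' bJ; have := congr1 (fun x => mul x x) bJ.
rewrite /= !(mulZx HA) !(mulxZ HA) !sphere_sqr // !scalerN !scalerA.
by move/oppr_inj; apply: scale_unit_inj.
Qed.

Lemma stem_im0 (F : R * R -> A * A) a : stem D F -> D (a, 0) -> (F (a, 0)).2 = 0.
Proof.
move=> sF Da; apply: (@lmod_two_torsion_free R A).
by have := congr1 snd (sF a 0 Da); rewrite oppr0 /= => {1}->; rewrite addNr.
Qed.

(* A point determines a and b J, so (b, J) up to (-b, -J); the stem condition
   absorbs this sign, and forces the second component to vanish when b = 0. *)
Lemma stem_value_eq (F : R * R -> A * A) a b J a' b' J' :
  stem D F -> D (a, b) -> sphere J -> sphere J' -> a *: u + b *: J = a' *: u + b' *: J' ->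
  (F (a, b)).1 + mul J (F (a, b)).2 = (F (a', b')).1 + mul J' (F (a', b')).2.
Proof.
move=> sF Dab sJ sJ' E; have [u0|un0] := eqVneq u 0.
  have A0 (x : A) : x = 0 by rewrite -(ar_mul1x altA x) u0 (mul0x altA).
  by rewrite [LHS]A0 [RHS]A0.
have [<- bJ] := point_repr_eq un0 sJ sJ' E.
have bb := sphere_scale_sqr un0 sJ sJ' bJ.
have [b0|bn0] := eqVneq b 0.
  have : b' * b' == 0 by rewrite -bb b0 mul0r.
  rewrite mulf_eq0 orbb => /eqP b'0.
  by move: Dab; rewrite b0 b'0 => Da; rewrite stem_im0 // !(mulx0 altA).
have : (b' - b) * (b' + b) = 0.
  have -> : (b' - b) * (b' + b) = b' * b' - b * b by ring.
  by rewrite bb subrr.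
move/eqP; rewrite mulf_eq0 subr_eq0 addr_eq0 => /orP [] /eqP eb; subst b'.
  by have -> : J' = J by apply: (scalerI bn0); rewrite bJ.
have -> : J' = - J by apply: (scalerI bn0); rewrite scalerN bJ scaleNr opprK.
by rewrite (sF _ _ Dab) /cbar /= (mulNx altA) (mulxN altA) opprK.
Qed.

Lemma decompP x : Omega mul u cj D x ->
  let t := decomp mul u cj D x in
  D (t.1.1, t.1.2) /\ sphere t.2 /\ x = t.1.1 *: u + t.1.2 *: t.2.
Proof.
move=> [a [b [J [Dab [sJ E]]]]].
apply: (epsilon_spec _ (fun t : R * R * A =>
  D (t.1.1, t.1.2) /\ sphere t.2 /\ x = t.1.1 *: u + t.1.2 *: t.2)).
by exists (a, b, J).
Qed.

Lemma induces_I F : stem D F -> induces F (I F).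
Proof.
move=> sF a b J Dab sJ; have Ox : Omega mul u cj D (a *: u + b *: J) by exists a, b, J.
have := decompP Ox; rewrite /Defs.I.
case: (decomp _ _ _ _ _) => [[a' b'] J'] /= [Da' [sJ' E]].
exact: stem_value_eq.
Qed.

Lemma stem_uniq F G f : induces F f -> induces G f -> forall z, D z -> F z = G z.
Proof.
move=> IF IG [a b] Dab; have [J sJ] := HS; have sJN := sphereN sJ.
have := IF a b J Dab sJ; have := IF a b (- J) Dab sJN.
rewrite (IG a b J Dab sJ) (IG a b (- J) Dab sJN) !(mulNx altA).
case: (F (a, b)) (G (a, b)) => [F1 F2] [G1 G2] /= EN E.
have E1 : F1 = G1.
  apply: subr0_eq; apply: (@lmod_two_torsion_free R A).
  by apply: (eq_of_sub_eq (esym (congr2 +%R E EN))); zmod_ring.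
have E2 : mul J (F2 - G2) = 0.
  rewrite (ar_mulDr altA) (mulxN altA); apply: (eq_of_sub_eq (esym E)).
  by rewrite E1; zmod_ring.
have := sphere_mulK (F2 - G2) sJ; rewrite E2 (mulx0 altA) => /eqP.
by rewrite eq_sym oppr_eq0 subr_eq0 E1 => /eqP ->.
Qed.

Lemma stem_ofP f : slice f -> stem D (SO f) /\ induces (SO f) f.
Proof. exact: epsilon_spec. Qed.

Lemma slice_I F : stem D F -> slice (I F).
Proof. by move=> sF; exists F; split; last exact: induces_I. Qed.

Lemma stem_of_I F z : stem D F -> D z -> SO (I F) z = F z.
Proof.
move=> sF; have [_ ISO] := stem_ofP (slice_I sF).
exact: stem_uniq ISO (induces_I sF) z.
Qed.

Lemma stem_cmul F G : stem D F -> stem D G -> stem D (fun z => cmul mul (F z) (G z)).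
Proof.
move=> sF sG a b Dab; rewrite (sF a b Dab) (sG a b Dab).
apply: injective_projections => /=; rewrite ?(mulNx altA, mulxN altA); zmod_ring.
Qed.

Lemma stem_cinv F : stem D F -> stem D (fun z => cinv cj (F z)).
Proof. by move=> sF a b Dab; rewrite (sF a b Dab) /cinv /= (cjN HA). Qed.

Lemma slice_smul f g : slice f -> slice g -> slice (smul f g).
Proof. by move=> /stem_ofP [sf _] /stem_ofP [sg _]; apply/slice_I/stem_cmul. Qed.

Lemma slice_sconj f : slice f -> slice (sconj f).
Proof. by move=> /stem_ofP [sf _]; apply/slice_I/stem_cinv. Qed.

Lemma slice_N f : slice f -> slice (N f).
Proof. by move=> sf; apply/slice_smul/slice_sconj. Qed.

Lemma stem_of_smul f g z : slice f -> slice g -> D z ->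
  SO (smul f g) z = cmul mul (SO f z) (SO g z).
Proof.
by move=> /stem_ofP [sf _] /stem_ofP [sg _] Dz; rewrite stem_of_I //; apply: stem_cmul.
Qed.

Lemma stem_of_sconj f z : slice f -> D z -> SO (sconj f) z = cinv cj (SO f z).
Proof. by move=> /stem_ofP [sf _] Dz; rewrite stem_of_I //; apply: stem_cinv. Qed.

Lemma stem_of_N f z : slice f -> D z ->
  SO (N f) z = cmul mul (SO f z) (cinv cj (SO f z)).
Proof.
by move=> sf Dz; rewrite stem_of_smul ?stem_of_sconj //; apply: slice_sconj.
Qed.

Lemma induces_sone : induces (fun _ => cunit u) (sone u).
Proof. by move=> a b J _ _; rewrite /sone /= (mulx0 altA) addr0. Qed.

Lemma slice_sone : slice (sone u).
Proof.
exists (fun _ => cunit u); split; last exact: induces_sone.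
by move=> a b _; rewrite /cbar /= oppr0.
Qed.

Lemma stem_of_sone z : D z -> SO (sone u) z = cunit u.
Proof. by have [_ ISO] := stem_ofP slice_sone; exact: stem_uniq ISO induces_sone z. Qed.

Lemma eqOP f g : slice f -> slice g -> eqO f g <-> forall z, D z -> SO f z = SO g z.
Proof.
move=> /stem_ofP [_ If] /stem_ofP [_ Ig]; split=> [fg | E x [a [b [J [Dab [sJ ->]]]]]].
  apply: stem_uniq If _ => a b J Dab sJ.
  by rewrite fg; [exact: Ig | exists a, b, J].
by rewrite (If a b J Dab sJ) (Ig a b J Dab sJ) E.
Qed.

Lemma sinvP h g : slice h ->
  is_sinv h g <-> slice g /\ forall z, D z -> cinverse (SO h z) (SO g z).
Proof.
move=> sh; split=> [[sg [hg gh]] | [sg E]].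
  move/(eqOP (slice_smul sh sg) slice_sone): hg => hg.
  move/(eqOP (slice_smul sg sh) slice_sone): gh => gh.
  split=> // z Dz.
  by split; rewrite -(stem_of_sone Dz) -stem_of_smul // ?hg ?gh.
split=> //; split.
  apply/(eqOP (slice_smul sh sg) slice_sone) => z Dz.
  by rewrite stem_of_smul ?stem_of_sone //; case: (E z Dz).
apply/(eqOP (slice_smul sg sh) slice_sone) => z Dz.
by rewrite stem_of_smul ?stem_of_sone //; case: (E z Dz).
Qed.

Lemma is_sinv_sconj f g : slice f -> is_sinv f g -> is_sinv (sconj f) (sconj g).
Proof.
move=> sf /(sinvP _ sf) [sg fg]; apply/(sinvP _ (slice_sconj sf)).
split=> [|z Dz]; first exact: slice_sconj.
by rewrite !stem_of_sconj //; apply/(is_inverse_cinv HA)/fg.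
Qed.

Lemma is_sinv_of_sconj f h : slice f -> is_sinv (sconj f) h -> is_sinv f (sconj h).
Proof.
move=> sf /(sinvP _ (slice_sconj sf)) [sh fh]; apply/(sinvP _ sf).
split=> [|z Dz]; first exact: slice_sconj.
rewrite stem_of_sconj // -[SO f z](cinvK HA); apply: (is_inverse_cinv HA).
by rewrite -stem_of_sconj //; apply: fh.
Qed.

Lemma sinv_uniq h g g' : slice h -> is_sinv h g -> is_sinv h g' -> eqO g g'.
Proof.
move=> sh /(sinvP _ sh) [sg hg] /(sinvP _ sh) [sg' hg'].
apply/eqOP => // z Dz; apply: (inverse_uniq altC tfC (hg' z Dz)).
by case: (hg z Dz).
Qed.

Lemma is_sinv_N f g : slice f -> is_sinv f g ->
  is_sinv (N f) (smul (sconj g) g) /\ is_sinv (N f) (N (sconj g)).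
Proof.
move=> sf /(sinvP _ sf) [sg fg]; have sgc := slice_sconj sg.
have Nfg z : D z -> cinverse (cmul mul (SO f z) (cinv cj (SO f z)))
                             (cmul mul (cinv cj (SO g z)) (SO g z)).
  by move=> Dz; exact: (inverse_mul altC tfC (fg z Dz) (is_inverse_cinv HA (fg z Dz))).
split; apply/(sinvP _ (slice_N sf)); split.
- exact: slice_smul.
- by move=> z Dz; rewrite stem_of_N ?stem_of_smul ?stem_of_sconj //; apply: Nfg.
- exact: slice_N.
- by move=> z Dz; rewrite !stem_of_N ?stem_of_sconj ?(cinvK HA) //; apply: Nfg.
Qed.

Lemma is_sinv_N_sconj f g : slice f -> is_sinv f g ->
  is_sinv (N (sconj f)) (smul g (sconj g)).
Proof.
move=> sf /(sinvP _ sf) [sg fg]; have sfc := slice_sconj sf.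
apply/(sinvP _ (slice_N sfc)); split=> [|z Dz]; first exact/slice_smul/slice_sconj.
rewrite stem_of_N ?stem_of_smul ?stem_of_sconj ?(cinvK HA) //; last exact: slice_sconj.
exact: (inverse_mul altC tfC (is_inverse_cinv HA (fg z Dz)) (fg z Dz)).
Qed.

Lemma is_sinv_of_N f n1 n2 :
  slice f -> is_sinv (N f) n1 -> is_sinv (N (sconj f)) n2 ->
  is_sinv f (smul (sconj f) n1) /\ is_sinv f (smul n2 (sconj f)).
Proof.
move=> sf; have sfc := slice_sconj sf.
move=> /(sinvP _ (slice_N sf)) [sn1 fn1] /(sinvP _ (slice_N sfc)) [sn2 fn2].
have key z : D z -> cinverse (SO f z) (cmul mul (cinv cj (SO f z)) (SO n1 z)) /\
    cmul mul (SO n2 z) (cinv cj (SO f z)) = cmul mul (cinv cj (SO f z)) (SO n1 z).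
  move=> Dz; apply: (inverse_of_mul altC tfC); first by rewrite -stem_of_N //; apply: fn1.
  by have := fn2 z Dz; rewrite stem_of_N ?stem_of_sconj ?(cinvK HA).
split; apply/(sinvP _ sf); split; try exact: slice_smul.
  by move=> z Dz; rewrite stem_of_smul ?stem_of_sconj //; case: (key z Dz).
by move=> z Dz; rewrite stem_of_smul ?stem_of_sconj //; case: (key z Dz) => ? ->.
Qed.

End SliceFunctions.

Theorem theorem2p1 (R : realType) (A : vectType R)
    (mul : A -> A -> A) (u : A) (cj : A -> A) (D : R * R -> Prop)
    (HA : alt_star_alg mul u cj)
    (HS : exists J, sphereA mul u cj J)
    (HD : exists z, D z)
    (HDc : conj_inv D)
    (f : A -> A) (Hf : is_slice mul u cj D f) :
  let eq := eqO mul u cj D in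
  let inv := is_sinv mul u cj D in
  let invb := sinvertible mul u cj D in
  let sm := smul mul u cj D in
  let sc := sconj mul u cj D in
  let Nf := N mul u cj D in
  (invb f <-> invb (sc f)) /\
  (forall g h, inv f g -> inv (sc f) h -> eq h (sc g)) /\
  (invb f <-> (invb (Nf f) /\ invb (Nf (sc f)))) /\
  (forall g n1 n2, inv f g -> inv (Nf f) n1 -> inv (Nf (sc f)) n2 ->
     eq g (sm (sc f) n1) /\ eq g (sm n2 (sc f))) /\
  (forall g n1, inv f g -> inv (Nf f) n1 ->
     eq n1 (sm (sc g) g) /\ eq n1 (Nf (sc g))).
Proof.
move=> eq inv invb sm sc Nf; have sfc := slice_sconj HA Hf.
split.
  split=> [[g ig] | [h ih]]; first by exists (sc g); apply: is_sinv_sconj.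
  by exists (sc h); apply: is_sinv_of_sconj.
split.
  by move=> g h ig ih; apply: (sinv_uniq HA HS sfc ih); apply: is_sinv_sconj.
split.
  split=> [[g ig] | [[n1 i1] [n2 i2]]].
    split; first by exists (sm (sc g) g); case: (is_sinv_N HA HS Hf ig).
    by exists (sm g (sc g)); apply: is_sinv_N_sconj.
  by exists (sm (sc f) n1); case: (is_sinv_of_N HA HS Hf i1 i2).
split.
  move=> g n1 n2 ig i1 i2; have [j1 j2] := is_sinv_of_N HA HS Hf i1 i2.
  by split; apply: (sinv_uniq HA HS Hf ig).
move=> g n1 ig i1; have [j1 j2] := is_sinv_N HA HS Hf ig.
by split; apply: (sinv_uniq HA HS (slice_N HA Hf) i1).
Qed.
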